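(* Let $\alpha,\beta>0$, let $g(n)=\sum_{i=0}^kc_in^i$ with $k\ge0$ and $c_k\ne0$, let $x$ satisfy $x(n)=\alpha\,x(\lfloor n/2\rfloor)+\beta\,x(\lceil n/2\rceil)+g(n)$ for $n\ge2$ with given $x(1)$, set $x(0)\coloneqq0$, $h(n)\coloneqq x(n+1)-x(n)$, $d_0\coloneqq(1-\beta)x(1)-g(1)+g(0)$, $d_1\coloneqq g(1)-(1-\beta)x(1)$. For $0\le i,j<k$ put \[b_{0j}=\sum_{i=j+1}^k\binom ij2^jc_i,\quad b_{1j}=\sum_{i=j+1}^k\binom ij(2^i-2^j)c_i,\quad a_{0ij}=[j=i]2^i,\quad a_{1ij}=\binom ij2^j,\] and for $r\in\{0,1\}$ let $b_r=(b_{r(k-1)},\dots,b_{r0})$ (a row vector), $\widetilde A_r=(a_{rij})_{i=k-1,\dots,0;\ j=k-1,\dots,0}$ (a $k\times k$ matrix with rows and columns indexed in decreasing order), $\mu_0=\beta$, $\mu_1=\alpha$, and \[A_r=\begin{pmatrix}\mu_r&b_r&d_r\\0&\widetilde A_r&0\\0&0&[r=0]\end{pmatrix}\in\mathbb{C}^{(k+2)\times(k+2)}.\] Let $u=(1,0,\dots,0)\in\mathbb{C}^{1\times(k+2)}$ and $w=(x(1),0,\dots,0,1,1)^\top$ if $k\ge1$, $w=(x(1),1)^\top$ if $k=0$. Then $(u,(A_0,A_1),w)$ is a linear representation of the $2$-regular sequence $h$, with associated right vector-valued sequence $n\mapsto(h(n),n^{k-1},\dots,n,1,\delta_0(n))^\top$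 where $\delta_0(n)=[n=0]$. If moreover $d_0=d_1=0$, then removing the last column of $u$, the last row and column of $A_0$ and $A_1$, and the last row of $w$ also yields a linear representation of $h$.
   Context: A sequence $x\in\mathbb{C}^{\mathbb{N}_0}$ is $q$-regular if there are $D\ge0$, $D\times D$ complex matrices $A_0,\dots,A_{q-1}$, $u\in\mathbb{C}^{1\times D}$ and $v\in(\mathbb{C}^{D\times1})^{\mathbb{N}_0}$ with $x(n)=uv(n)$ and $v(qn+r)=A_rv(n)$ for all $0\le r<q$, $n\ge0$; $(u,A,v(0))$ is a linear representation and $v$ the associated right vector-valued sequence. Iverson's bracket: $[S]=1$ if $S$ is true and $0$ otherwise; $\binom ij=0$ for $j>i$. *)

(* The scalar field is an arbitrary numeric closed field C
   (e.g. algC or R[i]); the paper's C^{N_0} is the instance C = complex numbers. *)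
From HB Require Import structures.
From mathcomp Require Import all_boot all_order all_algebra.
Set Implicit Arguments. Unset Strict Implicit. Unset Printing Implicit Defensive.
Import Order.TTheory GRing.Theory Num.Theory.
Local Open Scope ring_scope.

Section Defs.
Variable C : numClosedFieldType.

Definition rvs_rec (q D : nat) (A : 'I_q -> 'M[C]_D) (v : nat -> 'cV[C]_D) :=
  forall (r : 'I_q) (n : nat), v (q * n + r)%N = A r *m v n.

Definition linrep_with (q D : nat) (u : 'rV[C]_D) (A : 'I_q -> 'M[C]_D)
  (v : nat -> 'cV[C]_D) (s : nat -> C) :=
  rvs_rec A v /\ forall n, s n = (u *m v n) 0 0.

Definition linear_rep (q D : nat) (u : 'rV[C]_D) (A : 'I_q -> 'M[C]_D)
  (w : 'cV[C]_D) (s : nat -> C) :=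
  exists v : nat -> 'cV[C]_D, v 0%N = w /\ linrep_with u A v s.

Definition gpoly (k : nat) (c : nat -> C) (n : nat) : C :=
  \sum_(i < k.+1) c i * (n%:R) ^+ i.

Definition hseq (x : nat -> C) (n : nat) : C := x n.+1 - x n.

Definition d0 (beta : C) (k : nat) (c : nat -> C) (x1 : C) : C :=
  (1 - beta) * x1 - gpoly k c 1 + gpoly k c 0.
Definition d1 (beta : C) (k : nat) (c : nat -> C) (x1 : C) : C :=
  gpoly k c 1 - (1 - beta) * x1.

Definition bcoef (r : nat) (k : nat) (c : nat -> C) (j : nat) : C :=
  if r == 0%N then
    \sum_(j.+1 <= i < k.+1) ('C(i, j))%:R * 2%:R ^+ j * c i
  else
    \sum_(j.+1 <= i < k.+1) ('C(i, j))%:R * (2%:R ^+ i - 2%:R ^+ j) * c i.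

Definition acoef (r : nat) (i j : nat) : C :=
  if r == 0%N then (j == i)%:R * 2%:R ^+ i
  else ('C(i, j))%:R * 2%:R ^+ j.

Definition dcoef (r : nat) (alpha beta : C) (k : nat) (c : nat -> C) (x1 : C) : C :=
  if r == 0%N then d0 beta k c x1 else d1 beta k c x1.

Definition mu (r : nat) (alpha beta : C) : C := if r == 0%N then beta else alpha.

(* Index convention for the (k+2)-dimensional vectors/matrices:
   position 0 <-> first component (h(n));
   position p with 1 <= p <= k <-> the component n^(k-p)
     (so the tilde-A block has rows/columns i = k-1,...,0 in decreasing order);
   position k+1 <-> last component (delta_0(n)). *)
Definition repA (alpha beta : C) (k : nat) (c : nat -> C) (x1 : C) (r : 'I_2)
  : 'M[C]_(k.+2) :=
  \matrix_(p, q) (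
    if p == 0%N :> nat then
      (if q == 0%N :> nat then mu r alpha beta
       else if (q <= k)%N then bcoef r k c (k - q)
       else dcoef r alpha beta k c x1)
    else if (p <= k)%N then
      (if (1 <= q <= k)%N then acoef r (k - p) (k - q) else 0)
    else
      (if q == k.+1 :> nat then (r == 0%N :> nat)%:R else 0)).

Definition repu (k : nat) : 'rV[C]_(k.+2) := \row_q (q == 0%N :> nat)%:R.

Definition repw (k : nat) (x1 : C) : 'cV[C]_(k.+2) :=
  \col_p (if p == 0%N :> nat then x1
          else if (p == k :> nat) || (p == k.+1 :> nat) then 1 else 0).

Definition repv (k : nat) (x : nat -> C) (n : nat) : 'cV[C]_(k.+2) :=
  \col_p (if p == 0%N :> nat then hseq x n
          else if (p <= k)%N then (n%:R : C) ^+ (k - p)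
          else (n == 0%N)%:R).

Definition drop_last_col (m n : nat) (M : 'M[C]_(m, n.+1)) : 'M[C]_(m, n) :=
  colsub (widen_ord (leqnSn n)) M.
Definition drop_last_row (m n : nat) (M : 'M[C]_(m.+1, n)) : 'M[C]_(m, n) :=
  rowsub (widen_ord (leqnSn m)) M.
Definition drop_last_rc (n : nat) (M : 'M[C]_(n.+1)) : 'M[C]_n :=
  mxsub (widen_ord (leqnSn n)) (widen_ord (leqnSn n)) M.

End Defs.

From HB Require Import structures.
From mathcomp Require Import all_boot all_order all_algebra.
From mathcomp Require Import zify ring.
Import Order.TTheory GRing.Theory Num.Theory.
Set Implicit Arguments. Unset Strict Implicit. Unset Printing Implicit Defensive.
Local Open Scope ring_scope.

(* Halving the argument turns the recurrence for x into one for h: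
   h(2n) = beta h(n) + (g(2n+1) - g(2n)) + d0 [n = 0] and
   h(2n+1) = alpha h(n) + (g(2n+2) - g(2n+1)) + d1 [n = 0].
   By the binomial theorem both differences are polynomials in n of degree < k
   with coefficients b_0j and b_1j, and (2n)^m, (2n+1)^m expand in the monomials
   n^j with coefficients a_0mj, a_1mj.  Together with [2n + r = 0] = [r = 0][n = 0]
   this says that A_r maps the vector (h(n), n^(k-1), ..., 1, [n = 0]) to its
   value at 2n + r.  When d0 = d1 = 0 the last coordinate no longer feeds into
   the others and can be dropped. *)

Lemma sum_lower_triangular (R : comNzRingType) (k : nat) (c : nat -> R)
    (G : nat -> nat -> R) (y : R) :
  \sum_(i < k.+1) c i * \sum_(j < i) G i j * y ^+ j
  = \sum_(j < k) (\sum_(j.+1 <= i < k.+1) G i j * c i) * y ^+ j.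
Proof.
transitivity (\sum_(i < k.+1) \sum_(j < k | (j < i)%N) G i j * c i * y ^+ j).
  apply: eq_bigr => i _; have le_ik : (i <= k)%N := ltn_ord i.
  rewrite (big_ord_widen k (fun j => G i j * y ^+ j) le_ik) mulr_sumr.
  by apply: eq_bigr => j _; rewrite mulrCA mulrA.
rewrite (exchange_big_dep xpredT) //=; apply: eq_bigr => j _.
by rewrite big_geq_mkord mulr_suml.
Qed.

Lemma exprD1n_subr (R : comNzRingType) (z : R) (i : nat) :
  (z + 1) ^+ i - z ^+ i = \sum_(j < i) 'C(i, j)%:R * z ^+ j.
Proof.
rewrite exprD1n big_ord_recr /= binn mulr1n addrK.
by apply: eq_bigr => j _; rewrite mulr_natl.
Qed.

Lemma exprD2n_subr (R : comNzRingType) (z : R) (i : nat) :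
  (2 * z + 2) ^+ i - (2 * z + 1) ^+ i
  = \sum_(j < i) 'C(i, j)%:R * (2 ^+ i - 2 ^+ j) * z ^+ j.
Proof.
have -> : 2 * z + 2 = 2 * (z + 1) by rewrite mulrDr mulr1.
rewrite exprMn (exprD1n z) (exprD1n (2 * z)) mulr_sumr -sumrB big_ord_recr /=.
rewrite binn !mulr1n -exprMn subrr addr0; apply: eq_bigr => j _.
rewrite exprMn -[z ^+ j *+ _]mulr_natl -[_ * z ^+ j *+ _]mulr_natl.
by move: 'C(i, j)%:R (2 ^+ i) (2 ^+ j) (z ^+ j) => b s t u; ring.
Qed.

Section PolynomialDifferences.
Variables (C : numClosedFieldType) (k : nat) (c : nat -> C).

Lemma gpoly_diff_double (n : nat) :
  gpoly k c (2 * n + 1) - gpoly k c (2 * n)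
  = \sum_(j < k) bcoef 0 k c j * n%:R ^+ j.
Proof.
rewrite /gpoly -sumrB -(@sum_lower_triangular _ k c (fun i j => 'C(i, j)%:R * 2 ^+ j)).
apply: eq_bigr => i _; rewrite -mulrBr natrD natrM exprD1n_subr.
by congr (_ * _); apply: eq_bigr => j _; rewrite exprMn mulrA.
Qed.

Lemma gpoly_diff_double_succ (n : nat) :
  gpoly k c (2 * n + 2) - gpoly k c (2 * n + 1)
  = \sum_(j < k) bcoef 1 k c j * n%:R ^+ j.
Proof.
rewrite /gpoly -sumrB.
rewrite -(@sum_lower_triangular _ k c (fun i j => 'C(i, j)%:R * (2 ^+ i - 2 ^+ j))).
by apply: eq_bigr => i _; rewrite -mulrBr !(natrD _ (2 * n)) natrM exprD2n_subr.
Qed.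

Lemma sum_acoef0 (m : nat) (z : C) : (m < k)%N ->
  \sum_(j < k) acoef C 0 m j * z ^+ j = (2 * z) ^+ m.
Proof.
move=> ltmk; rewrite (bigD1 (Ordinal ltmk)) //= /acoef /= eqxx mul1r -exprMn.
rewrite big1 ?addr0 // => j neq_jm.
by move: neq_jm; rewrite -val_eqE /= => /negbTE ->; rewrite mulr0n !mul0r.
Qed.

Lemma sum_acoef1 (m : nat) (z : C) : (m < k)%N ->
  \sum_(j < k) acoef C 1 m j * z ^+ j = (2 * z + 1) ^+ m.
Proof.
move=> ltmk; rewrite exprD1n (big_ord_widen k (fun j => (2 * z) ^+ j *+ 'C(m, j)) ltmk).
rewrite [RHS]big_mkcond; apply: eq_bigr => j _; rewrite /acoef /= ltnS.
case: leqP => [_|lt_mj]; first by rewrite -[RHS]mulr_natl exprMn mulrA.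
by rewrite bin_small // mulr0n !mul0r.
Qed.

End PolynomialDifferences.

Section DifferenceRecurrence.
Variables (C : numClosedFieldType) (alpha beta : C) (g x : nat -> C).
Hypothesis x0 : x 0%N = 0.
Hypothesis x_rec : forall n : nat, (2 <= n)%N ->
  x n = alpha * x (n %/ 2)%N + beta * x (n.+1 %/ 2)%N + g n.

Lemma x_double (m : nat) : (0 < m)%N ->
  x (2 * m)%N = alpha * x m + beta * x m + g (2 * m)%N.
Proof.
move=> m_gt0; rewrite x_rec; last lia.
have -> : ((2 * m) %/ 2 = m)%N by lia.
by have -> : ((2 * m).+1 %/ 2 = m)%N by lia.
Qed.

Lemma x_double_succ (m : nat) : (0 < m)%N ->
  x (2 * m + 1)%N = alpha * x m + beta * x m.+1 + g (2 * m + 1)%N.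
Proof.
move=> m_gt0; rewrite x_rec; last lia.
have -> : ((2 * m + 1) %/ 2 = m)%N by lia.
by have -> : ((2 * m + 1).+1 %/ 2 = m.+1)%N by lia.
Qed.

Lemma hseq_double (n : nat) :
  hseq x (2 * n) = beta * hseq x n + (g (2 * n + 1)%N - g (2 * n)%N)
                   + ((1 - beta) * x 1%N - g 1%N + g 0%N) * (n == 0)%N%:R.
Proof.
rewrite /hseq; case: n => [|m].
  by rewrite muln0 add0n x0 eqxx /=; ring.
by rewrite -addn1 x_double_succ // x_double // mulr0n; ring.
Qed.

Lemma hseq_double_succ (n : nat) :
  hseq x (2 * n + 1) = alpha * hseq x n + (g (2 * n + 2)%N - g (2 * n + 1)%N)
                       + (g 1%N - (1 - beta) * x 1%N) * (n == 0)%N%:R.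
Proof.
rewrite /hseq (_ : (2 * n + 1).+1 = 2 * n.+1)%N; last lia.
rewrite x_double // (_ : (2 * n.+1 = 2 * n + 2)%N); last lia.
case: n => [|m]; first by rewrite x0 eqxx /=; ring.
by rewrite x_double_succ // mulr0n; ring.
Qed.

End DifferenceRecurrence.

Lemma sum_ord_split_ends (V : nmodType) (k : nat) (F : 'I_k.+2 -> V) :
  \sum_(q < k.+2) F q = F ord0 + \sum_(j < k) F (inord (k - j)) + F ord_max.
Proof.
rewrite big_ord_recr big_ord_recl /= (reindex_inj rev_ord_inj) /=.
congr (_ + _ + _); first by congr F; apply: val_inj.
apply: eq_bigr => j _; congr F; apply: val_inj.
by have := ltn_ord j; rewrite /= /bump /= inordK; lia.
Qed.

Section RepresentationMatrices.
Variables (C : numClosedFieldType) (alpha beta : C) (k : nat) (c : nat -> C) (x1 : C).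
Notation A := (repA alpha beta k c x1).

Lemma repA_col0 (r : 'I_2) (p : 'I_k.+2) :
  A r p ord0 = if p == 0%N :> nat then mu r alpha beta else 0.
Proof. by rewrite mxE /=; case: ifP => // _; case: ifP. Qed.

Lemma repA_colmid (r : 'I_2) (p : 'I_k.+2) (j : nat) : (j < k)%N ->
  A r p (inord (k - j)) =
  if p == 0%N :> nat then bcoef r k c j
  else if (p <= k)%N then acoef C r (k - p) j else 0.
Proof.
move=> ltjk; rewrite mxE inordK; last lia.
have -> : (k - j == 0)%N = false by lia.
have -> : (1 <= k - j <= k)%N by lia.
have -> : (k - j <= k)%N by lia.
have -> : (k - j == k.+1)%N = false by lia.
by have -> : (k - (k - j) = j)%N by lia.
Qed.

Lemma repA_colmax (r : 'I_2) (p : 'I_k.+2) :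
  A r p ord_max =
  if p == 0%N :> nat then dcoef r alpha beta k c x1
  else if (p <= k)%N then 0 else (r == 0%N :> nat)%:R.
Proof. by rewrite mxE /= ltnn eqxx. Qed.

Lemma repu_mulmx (v : 'cV[C]_k.+2) : (repu C k *m v) 0 0 = v 0 0.
Proof.
rewrite mxE big_ord_recl big1 ?addr0 => [|q _]; first by rewrite mxE mul1r.
by rewrite mxE mul0r.
Qed.

Lemma repA_lastcol_eq0 :
  d0 beta k c x1 = 0 -> d1 beta k c x1 = 0 ->
  forall (r : 'I_2) (p : 'I_k.+1), A r (widen_ord (leqnSn k.+1) p) ord_max = 0.
Proof.
move=> d0_0 d1_0 r p; rewrite repA_colmax /=.
case: eqP => _; first by rewrite /dcoef; case: eqP.
by have -> : (p <= k)%N := ltn_ord p.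
Qed.

End RepresentationMatrices.

Section SequenceRepresentation.
Variables (C : numClosedFieldType) (alpha beta : C) (k : nat) (c x : nat -> C).

Lemma repv_mid (n j : nat) (i : 'I_1) : (j < k)%N ->
  repv k x n (inord (k - j)) i = n%:R ^+ j.
Proof.
move=> ltjk; rewrite mxE inordK; last lia.
have -> : (k - j == 0)%N = false by lia.
have -> : (k - j <= k)%N by lia.
by have -> : (k - (k - j) = j)%N by lia.
Qed.

Hypothesis x0 : x 0%N = 0.
Hypothesis x_rec : forall n : nat, (2 <= n)%N ->
  x n = alpha * x (n %/ 2)%N + beta * x (n.+1 %/ 2)%N + gpoly k c n.
Notation A := (repA alpha beta k c (x 1%N)).

Lemma repA_mulmx_repv (r : 'I_2) (n : nat) :
  A r *m repv k x n = repv k x (2 * n + r).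
Proof.
apply/matrixP => p j; rewrite mxE sum_ord_split_ends repA_col0 repA_colmax.
under eq_bigr => q _ do rewrite repA_colmid // repv_mid //.
rewrite !mxE /= ltnn.
have [p0 | p_neq0] := eqP.
  case: r => -[|[|//]] ? /=.
    by rewrite addn0 (hseq_double x0 x_rec) gpoly_diff_double.
  by rewrite (hseq_double_succ x0 x_rec) gpoly_diff_double_succ.
rewrite mul0r add0r; case: leqP => [le_pk | lt_kp].
  rewrite mul0r addr0; have lt_kpk : (k - p < k)%N by lia.
  case: r => -[|[|//]] ? /=; first by rewrite sum_acoef0 // addn0 natrM.
  by rewrite sum_acoef1 // natrD natrM.
rewrite big1 ?add0r => [|q _]; last by rewrite mul0r.
case: r => -[|[|//]] ? /=; first by rewrite mul1r addn0 muln_eq0.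
by rewrite addn1 mul0r mulr0n.
Qed.

Lemma repv0 : repv k x 0 = repw k (x 1%N).
Proof.
apply/matrixP => p i; rewrite !mxE /hseq x0 subr0; case: eqP => // p_neq0.
have := ltn_ord p; case: (ltngtP p k) => [lt_pk | lt_kp | ->] lt_p_k2.
- rewrite expr0n; have -> : (k - p == 0)%N = false by lia.
  by have -> : (p == k.+1 :> nat) = false by lia.
- by have -> : (p == k.+1 :> nat) by lia.
- by rewrite subnn expr0.
Qed.

Lemma linrep_with_repv : linrep_with (repu C k) A (repv k x) (hseq x).
Proof.
split=> [r n | n]; first by rewrite repA_mulmx_repv.
by rewrite repu_mulmx mxE.
Qed.

End SequenceRepresentation.

Lemma linrep_with_drop_last (C : numClosedFieldType) (q D : nat)
    (u : 'rV[C]_D.+1) (A : 'I_q -> 'M[C]_D.+1) (v : nat -> 'cV[C]_D.+1)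
    (s : nat -> C) :
  u 0 ord_max = 0 ->
  (forall r (p : 'I_D), A r (widen_ord (leqnSn D) p) ord_max = 0) ->
  linrep_with u A v s ->
  linrep_with (drop_last_col u) (fun r => drop_last_rc (A r))
              (fun n => drop_last_row (v n)) s.
Proof.
move=> u_last A_last [v_rec s_out]; split=> [r n | n].
  apply/matrixP => p i; rewrite mxE v_rec mxE big_ord_recr /= A_last mul0r addr0.
  by rewrite mxE; apply: eq_bigr => j _; rewrite !mxE.
rewrite s_out mxE big_ord_recr /= u_last mul0r addr0 mxE.
by apply: eq_bigr => j _; rewrite !mxE.
Qed.

Theorem mainTheorem7 (C : numClosedFieldType) (alpha beta : C) (k : nat)
  (c : nat -> C) (x : nat -> C) :
  0 < alpha -> 0 < beta -> c k != 0 ->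
  x 0%N = 0 ->
  (forall n : nat, (2 <= n)%N ->
     x n = alpha * x (n %/ 2)%N + beta * x (n.+1 %/ 2)%N + gpoly k c n) ->
  [/\ linear_rep (repu C k) (repA alpha beta k c (x 1%N)) (repw k (x 1%N)) (hseq x),
      repv k x 0%N = repw k (x 1%N),
      linrep_with (repu C k) (repA alpha beta k c (x 1%N)) (repv k x) (hseq x)
    & (d0 beta k c (x 1%N) = 0 -> d1 beta k c (x 1%N) = 0 ->
       linear_rep (drop_last_col (repu C k))
                  (fun r => drop_last_rc (repA alpha beta k c (x 1%N) r))
                  (drop_last_row (repw k (x 1%N))) (hseq x))].
Proof.
(* The representation does not depend on the signs of alpha, beta or on c k. *)
move=> _ _ _ x0 x_rec.
have v0 := repv0 k x0.
have rep := linrep_with_repv x0 x_rec.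
split=> //; first by exists (repv k x).
move=> d0_0 d1_0; exists (fun n => drop_last_row (repv k x n)); split.
  by rewrite v0.
apply: linrep_with_drop_last rep; first by rewrite mxE.
exact: repA_lastcol_eq0.
Qed.
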